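(* Let $k\geq 0$ be an integer and let $G$ be a graph all of whose internal vertices are of type $0$ or $1$, such that $G_0$ is non-null, and let $n_0$ be the maximum number of vertices of a connected component of $G_0$. Then $\mu_\alpha(G)\leq k$ if and only if $\mu_\alpha(G_0)\leq k$ and for every independent set $I$ in $G_1$ of size at most $(k+1)n_0$ it holds that $\alpha(G_0)-i(G_0-N(I))\leq k$.
   Context: All graphs are finite and simple; the null graph (no vertices) is allowed. For a graph $H$, $\alpha(H)$ is the maximum size of an independent set, $i(H)$ the minimum size of an inclusion-maximal independent set (both $0$ for the null graph), and $\mu_\alpha(H)=\alpha(H)-i(H)$ is the independence gap. $N(I)=\bigcup_{v\in I}N(v)$ and $G_0-N(I)$ is obtained from $G_0$ by deleting the vertices of $N(I)$. Types of vertices: let $U$ be the set of vertices of $G$ whose connected component is a complete graph. In $G-U$, vertices of degree $1$ are leaves and the others are internal vertices. An internal vertex adjacent to exactly $k$ leaves is of type $k$; every vertex of $U$ is of type $0$. $G_i$ denotes the subgraph of $G$ induced by all vertices of type $i$. *)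

(* A simple graph is a symmetric irreflexive relation e on a
   finType T; induced subgraphs are represented by their vertex set S. *)
From mathcomp Require Import all_boot.
Set Implicit Arguments. Unset Strict Implicit. Unset Printing Implicit Defensive.

Section Graphs.
Variables (T : finType) (e : rel T).

Definition indep (S A : {set T}) : bool :=
  (A \subset S) && [forall x in A, forall y in A, ~~ e x y].

Definition maxindep (S A : {set T}) : bool :=
  indep S A && [forall v in S :\: A, exists u in A, e v u].

Definition alpha (S : {set T}) : nat := \max_(A : {set T} | indep S A) #|A|.

(* i(G[S]) : minimum size of a maximal independent set; the default value #|T|
   is never attained strictly since maximal independent sets always exist and
   have size <= #|T|. For S = set0 only A = set0 qualifies, giving 0. *)
Definition imin (S : {set T}) : nat :=
  \big[minn/#|T|]_(A : {set T} | maxindep S A) #|A|.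

Definition mu_alpha (S : {set T}) : nat := alpha S - imin S.

Definition nbhd (I : {set T}) : {set T} := [set u | [exists v in I, e v u]].

Definition compG (v : T) : {set T} := [set u | connect e v u].

Definition Uset : {set T} :=
  [set v | [forall x in compG v, forall y in compG v, (x != y) ==> e x y]].

Definition degGU (v : T) : nat := #|[set u | e v u & u \notin Uset]|.

Definition is_leaf (v : T) : bool := (v \notin Uset) && (degGU v == 1).
Definition is_internal (v : T) : bool := (v \notin Uset) && (degGU v != 1).

Definition nleaves (v : T) : nat := #|[set u | e v u & is_leaf u]|.

Definition typeset (k : nat) : {set T} :=
  [set v | (is_internal v && (nleaves v == k)) || ((k == 0) && (v \in Uset))].

Definition induced_rel (S : {set T}) : rel T :=
  [rel x y | e x y && (x \in S) && (y \in S)].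

Definition comp_in (S : {set T}) (v : T) : {set T} :=
  [set u | connect (induced_rel S) v u].

Definition max_comp_size (S : {set T}) : nat := \max_(v in S) #|comp_in S v|.

End Graphs.

From mathcomp Require Import all_boot zify.
Set Implicit Arguments. Unset Strict Implicit. Unset Printing Implicit Defensive.

(** Every leaf hangs off a unique type-1 vertex (its [stem]), every type-1
   vertex carries exactly one leaf (its [pendant]), and no vertex of G_0 is
   adjacent to a leaf. Hence alpha(G) = |V_1| + alpha(G_0), and i(G) is the
   least value of |V_1| + i(G_0 - N(I)) over independent sets I of G_1: a
   maximal independent set M of G_0 - N(I) extends to one of G by I and the
   pendants of V_1 \ I, and conversely a maximal independent set S of G gives
   I = S ∩ V_1 and M = S ∩ V_0 with |V_1| + |M| <= |S|.
   If moreover alpha(G_0) - |M| > k, the excess already shows up on a union W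
   of at most k+1 components of G_0. Keeping one neighbour in I of each vertex
   of W ∩ N(I) gives I' with |I'| <= (k+1) n_0, and M ∩ W extends to a maximal
   independent set of G_0 - N(I') of size at most |M ∩ W| + alpha(G_0 - W), so
   the excess survives. *)

Section IndependentSets.
Variables (T : finType) (e : rel T).
Hypotheses (e_sym : symmetric e) (e_irr : irreflexive e).
Implicit Types (S A B C I J X : {set T}).

Lemma indepP S A :
  reflect (A \subset S /\ {in A &, forall x y, ~~ e x y}) (indep e S A).
Proof.
apply: (iffP andP) => [[sAS /forall_inP eA]|[sAS eA]]; split => //.
  by move=> x y xA yA; apply: (forall_inP (eA x xA)).
by apply/forall_inP => x xA; apply/forall_inP => y yA; apply: eA.
Qed.

Lemma maxindepP S A :
  reflect (indep e S A /\ {in S, forall v, v \notin A -> exists2 u, u \in A & e v u})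
          (maxindep e S A).
Proof.
apply: (iffP andP) => [[iA /forall_inP dA]|[iA dA]]; split => //.
  move=> v vS vA; have /exists_inP[u uA evu] : [exists u in A, e v u].
    by apply: dA; rewrite inE vA.
  by exists u.
apply/forall_inP => v /setDP[vS vA]; have [u uA evu] := dA v vS vA.
by apply/exists_inP; exists u.
Qed.

Lemma nbhdP I u : reflect (exists2 v, v \in I & e v u) (u \in nbhd e I).
Proof. by rewrite inE; apply: (iffP exists_inP) => -[v]; exists v. Qed.

Lemma nbhd0 : nbhd e set0 = set0.
Proof. by apply/setP => u; rewrite in_set0; apply/negbTE/nbhdP => -[v]; rewrite inE. Qed.

Lemma nbhdS I J : I \subset J -> nbhd e I \subset nbhd e J.
Proof.
move=> sIJ; apply/subsetP => u /nbhdP[v vI evu].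
by apply/nbhdP; exists v; rewrite ?(subsetP sIJ).
Qed.

Lemma indepW S S' A B : indep e S A -> B \subset A -> B \subset S' -> indep e S' B.
Proof.
move=> /indepP[_ eA] sBA sBS'; apply/indepP; split => // x y xB yB.
by apply: eA; apply: (subsetP sBA).
Qed.

Lemma indep0 S : indep e S set0.
Proof. by apply/indepP; split => [|x]; rewrite ?sub0set ?inE. Qed.

Lemma card_le_alpha S A : indep e S A -> #|A| <= alpha e S.
Proof. exact: (@leq_bigmax_cond _ (indep e S) (fun B : {set T} => #|B|)). Qed.

Lemma alpha_witness S : exists2 A, indep e S A & #|A| = alpha e S.
Proof.
have : 0 < #|[pred A | indep e S A]| by apply/card_gt0P; exists set0; rewrite inE indep0.
move/(eq_bigmax_cond (fun A : {set T} => #|A|)) => [A]; rewrite inE => iA mA.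
by exists A; rewrite // /alpha mA.
Qed.

Lemma alpha0 : alpha e set0 = 0.
Proof.
have [A /indepP[sA0 _] <-] := alpha_witness set0.
by apply/eqP; rewrite cards_eq0 -subset0.
Qed.

Lemma alphaS S S' : S \subset S' -> alpha e S <= alpha e S'.
Proof.
move=> sSS'; have [A iA <-] := alpha_witness S; apply: card_le_alpha.
by apply: (indepW iA (subxx A)); apply: subset_trans sSS'; case/andP: iA.
Qed.

Lemma alpha_setID X C : alpha e X <= alpha e C + alpha e (X :\: C).
Proof.
have [A iA <-] := alpha_witness X; rewrite -(cardsID C A).
have sAX : A \subset X by case/andP: iA.
apply: leq_add; apply: card_le_alpha; apply: (indepW iA);
  by rewrite ?subsetIl ?subsetIr ?subsetDl ?setSD.
Qed.

Lemma alpha_setU A B : A :&: B = set0 -> {in A & B, forall a b, ~~ e a b} ->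
  alpha e A + alpha e B <= alpha e (A :|: B).
Proof.
move=> AB0 eAB.
have [X /indepP[sXA eX] <-] := alpha_witness A.
have [Y /indepP[sYB eY] <-] := alpha_witness B.
have XY0 : X :&: Y = set0 by apply/eqP; rewrite -subset0 -AB0 setISS.
rewrite -cardsUI XY0 cards0 addn0; apply: card_le_alpha.
apply/indepP; split; first exact: setUSS.
have eXY x y : x \in X -> y \in Y -> ~~ e x y.
  by move=> xX yY; apply: eAB; rewrite ?(subsetP sXA) ?(subsetP sYB).
move=> x y /setUP[xX|xY] /setUP[yX|yY]; [exact: eX | exact: eXY | | exact: eY].
by rewrite e_sym; apply: eXY.
Qed.

Lemma imin_le S A : maxindep e S A -> imin e S <= #|A|.
Proof.
(* [minn] with unit [#|T|] is not a monoid law, so we unfold the big operator. *)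
move=> mA; rewrite /imin; have : A \in index_enum {set T} by rewrite mem_index_enum.
elim: (index_enum _) => [|B r IHr] //=; rewrite big_cons inE => /predU1P[<-|Ar].
  by rewrite mA geq_minl.
by case: ifP => _; rewrite ?geq_min IHr ?orbT.
Qed.

Lemma maxindep_exists S : exists A, maxindep e S A.
Proof.
have [A iA cA] := alpha_witness S; exists A; apply/maxindepP; split => // v vS vA.
apply/exists_inP; apply: contraT; rewrite negb_exists_in => /forall_inP vA'.
have /card_le_alpha : indep e S (v |: A).
  move/indepP: iA => [sAS eA]; apply/indepP; split; first by rewrite subUset sub1set vS.
  move=> x y /setU1P[->|xA] /setU1P[->|yA]; [by rewrite e_irr | exact: vA' | | exact: eA].
  by rewrite e_sym; apply: vA'.
by rewrite cardsU1 vA cA ltnn.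
Qed.

Lemma imin_witness S : exists2 A, maxindep e S A & #|A| = imin e S.
Proof.
have [A0 mA0] := maxindep_exists S.
have : imin e S = #|T| \/ exists2 A, maxindep e S A & #|A| = imin e S.
  rewrite /imin; apply: (big_ind (fun n => n = #|T| \/ exists2 A, maxindep e S A & #|A| = n));
    [by left | by move=> m n; rewrite /minn; case: ifP | by move=> A mA; right; exists A].
case=> // iminT; exists A0 => //.
by apply/eqP; rewrite eqn_leq imin_le // iminT max_card.
Qed.

Lemma nbhd_cover I X :
  exists I', [/\ I' \subset I, #|I'| <= #|X| & X :&: nbhd e I \subset nbhd e I'].
Proof.
pose f w := odflt w [pick v in I | e v w].
have fP w : w \in nbhd e I -> f w \in I /\ e (f w) w.
  case/nbhdP => v vI evw; rewrite /f; case: pickP => [u /andP[] //|/(_ v)].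
  by rewrite vI evw.
exists (f @: (X :&: nbhd e I)); split.
- by apply/subsetP => _ /imsetP[w /setIP[_ /fP[fwI _]] ->].
- by rewrite (leq_trans (leq_imset_card _ _)) ?subset_leq_card ?subsetIl.
- apply/subsetP => w wXN; have /setIP[_ /fP[_ efw]] := wXN.
  by apply/nbhdP; exists (f w); first exact: imset_f.
Qed.

End IndependentSets.

Section ClosedSets.
Variables (T : finType) (e : rel T) (V : {set T}).
Hypotheses (e_sym : symmetric e) (e_irr : irreflexive e).
Implicit Types (S A B C I M W X Y : {set T}).

(* A union of connected components of G[V]. *)
Definition adj_closed X : Prop := X \subset V /\ {in X & V, forall x y, e x y -> y \in X}.

Lemma adj_closed0 : adj_closed set0.
Proof. by split=> [|x]; rewrite ?sub0set ?inE. Qed.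

Lemma adj_closedT : adj_closed V.
Proof. by split=> // x y _ ->. Qed.

Lemma adj_closed_noedge W : adj_closed W -> {in W & V :\: W, forall a b, ~~ e a b}.
Proof.
by move=> [_ cW] a b aW /setDP[bV bW]; apply: contra bW; apply: cW.
Qed.

Lemma adj_closedU X Y : adj_closed X -> adj_closed Y -> adj_closed (X :|: Y).
Proof.
move=> [sXV cX] [sYV cY]; split=> [|a b /setUP[aX|aY] bV eab]; first by rewrite subUset sXV.
- by apply/setUP; left; apply: cX eab.
- by apply/setUP; right; apply: cY eab.
Qed.

Lemma adj_closedD X C : adj_closed X -> adj_closed C -> adj_closed (X :\: C).
Proof.
move=> [sXV cX] cC; split=> [|a b /setDP[aX aC] bV eab].
  exact: subset_trans (subsetDl _ _) sXV.
rewrite inE (cX a b aX bV eab) andbT; apply/negP => bC.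
have aVC : a \in V :\: C by rewrite inE aC (subsetP sXV).
by have := adj_closed_noedge cC bC aVC; rewrite e_sym eab.
Qed.

Lemma adj_closed_connect X : adj_closed X -> closed (induced_rel e V) X.
Proof.
move=> [_ cX] x y /andP[/andP[exy xV] yV].
apply/idP/idP => [xX|yX]; first exact: cX x y xX yV exy.
by apply: (cX y x yX xV); rewrite e_sym.
Qed.

Lemma comp_in_sub X x : adj_closed X -> x \in X -> comp_in e V x \subset X.
Proof.
move=> cX xX; apply/subsetP => y; rewrite inE => /(closed_connect (adj_closed_connect cX)).
by rewrite xX => <-.
Qed.

Lemma adj_closed_comp_in x : x \in V -> adj_closed (comp_in e V x).
Proof.
move=> xV; have sCV := comp_in_sub adj_closedT xV.
split=> // a b; rewrite !inE => cxa bV eab; apply: (connect_trans cxa); apply: connect1.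
by rewrite /induced_rel /= eab bV (subsetP sCV) // inE.
Qed.

Lemma mem_comp_in x : x \in comp_in e V x.
Proof. by rewrite inE connect0. Qed.

Lemma card_comp_in_le x : x \in V -> #|comp_in e V x| <= max_comp_size e V.
Proof. exact: (@leq_bigmax_cond _ (mem V) (fun v => #|comp_in e V v|)). Qed.

Lemma alpha_adj_closedU C Y : adj_closed C -> Y \subset V :\: C ->
  alpha e Y + alpha e C <= alpha e (Y :|: C).
Proof.
move=> cC sY; apply: (alpha_setU e_sym) => [|a b aY bC].
  apply/eqP; rewrite -subset0; apply/subsetP => z /setIP[/(subsetP sY)/setDP[_ zC] zC'].
  by rewrite zC' in zC.
by rewrite e_sym; apply: (adj_closed_noedge cC bC (subsetP sY a aY)).
Qed.

Lemma deficit_few_components S M X j : indep e S M -> adj_closed X ->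
    #|M :&: X| + j <= alpha e X ->
  exists W, [/\ adj_closed W, W \subset X, #|W| <= j * max_comp_size e V
              & #|M :&: W| + j <= alpha e W].
Proof.
move=> iM; have [n] := ubnP #|X|; elim: n X j => // n IHn X j ltXn cX.
case: j => [|j] dX.
  exists set0; split; [exact: adj_closed0 | exact: sub0set | by rewrite cards0 |].
  by rewrite setI0 cards0 alpha0.
have [X0|[x xX]] := set_0Vmem X; first by move: dX; rewrite X0 alpha0 addnS.
have sXV : X \subset V by case: cX.
have xV : x \in V := subsetP sXV x xX.
pose C := comp_in e V x; have cC : adj_closed C := adj_closed_comp_in xV.
have sCX : C \subset X := comp_in_sub cX xX.
have ltXCn : #|X :\: C| < n.
  have C0 : 0 < #|C| by apply/card_gt0P; exists x; apply: mem_comp_in.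
  by have := subset_leq_card sCX; rewrite cardsDS //; lia.
have MX : #|M :&: X| = #|M :&: C| + #|M :&: (X :\: C)|.
  by rewrite -(cardsID C (M :&: X)) -setIA (setIidPr sCX) setIDA.
have aXC := alpha_setID e X C.
have MC : #|M :&: C| <= alpha e C.
  by apply/card_le_alpha/(indepW iM); rewrite ?subsetIl ?subsetIr.
have MXC : #|M :&: (X :\: C)| <= alpha e (X :\: C).
  by apply/card_le_alpha/(indepW iM); rewrite ?subsetIl ?subsetIr.
(* Peel off the component C of x, whose own deficit is alpha(C) - |M :&: C|. *)
have [|W [cW sWXC cardW dW]] :=
  IHn (X :\: C) (j.+1 - (alpha e C - #|M :&: C|)) ltXCn (adj_closedD cX cC); first lia.
have [d0|d_gt0] := posnP (alpha e C - #|M :&: C|).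
  by rewrite d0 subn0 in cardW dW; exists W; rewrite ?(subset_trans sWXC) ?subsetDl.
exists (W :|: C); split; [exact: adj_closedU | | |].
- by rewrite subUset sCX (subset_trans sWXC) ?subsetDl.
- rewrite (leq_trans (leq_card_setU W C).1) // (leq_trans (leq_add cardW (card_comp_in_le xV))) //.
  by rewrite addnC -mulSn leq_mul2r; apply/orP; right; lia.
- have := alpha_adj_closedU cC (subset_trans sWXC (setSD C sXV)).
  have := (leq_card_setU (M :&: W) (M :&: C)).1; rewrite -setIUr; lia.
Qed.

Lemma maxindep_setI_adj_closed S A W : S \subset V -> adj_closed W ->
  maxindep e S A -> maxindep e (S :&: W) (A :&: W).
Proof.
move=> sSV [_ cW] /maxindepP[iA dA]; have sAS : A \subset S by case/andP: iA.
apply/maxindepP; split; first by apply: (indepW iA); rewrite ?subsetIl ?setSI.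
move=> v /setIP[vS vW]; rewrite inE vW andbT => vA.
have [u uA evu] := dA v vS vA; exists u => //.
by rewrite inE uA (cW v u vW _ evu) // (subsetP sSV) // (subsetP sAS).
Qed.

Lemma maxindep_setU_adj_closed S A B W : S \subset V -> adj_closed W ->
  maxindep e (S :&: W) A -> maxindep e (S :\: W) B -> maxindep e S (A :|: B).
Proof.
move=> sSV cW /maxindepP[/indepP[sA eA] dA] /maxindepP[/indepP[sB eB] dB].
have eAB : {in A & B, forall a b, ~~ e a b}.
  move=> a b aA bB; apply: (adj_closed_noedge cW); first by case/setIP: (subsetP sA a aA).
  by have /setDP[bS bW] := subsetP sB b bB; rewrite inE bW (subsetP sSV).
apply/maxindepP; split.
  apply/indepP; split.
    by rewrite subUset (subset_trans sA (subsetIl _ _)) (subset_trans sB (subsetDl _ _)).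
  move=> x y /setUP[xA|xB] /setUP[yA|yB]; [exact: eA | exact: eAB | | exact: eB].
  by rewrite e_sym; apply: eAB.
move=> v vS; rewrite inE negb_or => /andP[vA vB].
have [vW|vW] := boolP (v \in W).
  by have [|u uA evu] := dA v _ vA; [rewrite inE vS vW | exists u; rewrite ?inE ?uA].
by have [|u uB evu] := dB v _ vB; [rewrite inE vS vW | exists u; rewrite ?inE ?uB ?orbT].
Qed.

Lemma imin_gap_shrink I M j : maxindep e (V :\: nbhd e I) M -> #|M| + j <= alpha e V ->
  exists I', [/\ I' \subset I, #|I'| <= j * max_comp_size e V &
                 imin e (V :\: nbhd e I') + j <= alpha e V].
Proof.
move=> mM dM; have /andP[iM _] := mM.
have sMV : M \subset V by case/andP: iM => /subset_trans->; rewrite ?subsetDl.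
have [|W [cW sWV cardW dW]] := deficit_few_components iM adj_closedT (j := j).
  by rewrite (setIidPl sMV).
have [I' [sI'I cardI' NW]] := nbhd_cover e I W.
exists I'; split => //; first exact: leq_trans cardI' cardW.
have SW : (V :\: nbhd e I') :&: W = (V :\: nbhd e I) :&: W.
  apply/setP => w; rewrite !in_setI !in_setD.
  have [wW|] := boolP (w \in W); rewrite ?andbF // !andbT.
  congr (~~ _ && _); apply/idP/idP => [|wN]; first exact: (subsetP (nbhdS e sI'I)).
  by apply: (subsetP NW); rewrite in_setI wW.
have mMW : maxindep e ((V :\: nbhd e I') :&: W) (M :&: W).
  by rewrite SW; apply: maxindep_setI_adj_closed (subsetDl _ _) cW mM.
have [B mB] := maxindep_exists e_sym e_irr ((V :\: nbhd e I') :\: W).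
have := imin_le (maxindep_setU_adj_closed (subsetDl _ _) cW mMW mB).
have cB : #|B| <= alpha e (V :\: W).
  have /andP[iB _] := mB; apply: leq_trans (card_le_alpha iB) _.
  exact/alphaS/setSD/subsetDl.
have aV : alpha e (V :\: W) + alpha e W <= alpha e V.
  have VE : V :\: W :|: W = V by rewrite setUC -{1}(setIidPr sWV) setID.
  by have := alpha_adj_closedU cW (subxx _); rewrite VE.
have := (leq_card_setU (M :&: W) B).1; lia.
Qed.

End ClosedSets.

Lemma pick_only (T : finType) (P : pred T) x0 y : P =1 pred1 y -> odflt x0 [pick z | P z] = y.
Proof. by move=> Py; case: pickP => [z|/(_ y)]; rewrite Py ?eqxx // => /eqP. Qed.

Section Leaves.
Variables (T : finType) (e : rel T).
Hypothesis e_sym : symmetric e.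
Hypothesis types01 : forall v, is_internal e v -> nleaves e v = 0 \/ nleaves e v = 1.
Implicit Types (A I M S : {set T}).
Local Notation V0 := (typeset e 0).
Local Notation V1 := (typeset e 1).

Definition stem x := odflt x [pick y | e x y].
Definition pendant v := odflt v [pick u | e v u && is_leaf e u].

Lemma notin_Uset_adj x y : x \notin Uset e -> e x y -> y \notin Uset e.
Proof.
move=> xU exy; apply: contra xU; rewrite !inE => /forall_inP compl_y.
have same_comp z : (z \in compG e x) = (z \in compG e y).
  by rewrite !inE (same_connect1 (sym_connect_sym e_sym) exy).
by apply/forall_inP => a; rewrite same_comp => /compl_y/forall_inP cy;
  apply/forall_inP => b; rewrite same_comp => /cy.
Qed.

Lemma leaf_adjE x y : is_leaf e x -> e x y = (y == stem x).
Proof.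
case/andP=> xU /cards1P[s /setP Es].
have ex : e x =1 pred1 s.
  move=> z; rewrite /= -in_set1 -Es inE.
  by case exz: (e x z); rewrite //= (notin_Uset_adj xU exz).
by rewrite /stem (pick_only x ex) ex.
Qed.

Lemma stemP x : is_leaf e x -> e x (stem x).
Proof. by move/leaf_adjE->. Qed.

Lemma pendant_adjE v u : v \in V1 -> (e v u && is_leaf e u) = (u == pendant v).
Proof.
rewrite inE orbF => /andP[_ /cards1P[s /setP Es]].
have ev : [pred z | e v z && is_leaf e z] =1 pred1 s.
  by move=> z; rewrite /= -in_set1 -Es inE.
by rewrite /pendant (pick_only v ev); apply: ev.
Qed.

Lemma pendantP v : v \in V1 -> e v (pendant v) /\ is_leaf e (pendant v).
Proof. by move/pendant_adjE => pv; apply/andP; rewrite pv. Qed.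

Lemma stem_pendant v : v \in V1 -> stem (pendant v) = v.
Proof. by move/pendantP=> [evp lp]; apply/esym/eqP; rewrite -leaf_adjE // e_sym. Qed.

Lemma leaf_adj_not_leaf x y : is_leaf e x -> e x y -> ~~ is_leaf e y.
Proof.
move=> lx exy; apply/negP => ly; have /andP[/negP[]] := lx; rewrite inE.
have eyx : e y x by rewrite e_sym.
move: (exy) (eyx); rewrite (leaf_adjE _ lx) (leaf_adjE _ ly) => /eqP sx /eqP sy.
have xy2 a b : e a b -> a \in [set x; y] -> b \in [set x; y].
  by move=> eab /set2P[] aE; move: eab; rewrite aE ?(leaf_adjE _ lx) ?(leaf_adjE _ ly) -?sx -?sy
    => /eqP->; rewrite !inE eqxx ?orbT.
have cl : closed e [set x; y] := intro_closed (sym_connect_sym e_sym) xy2.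
have in_xy z : z \in compG e x -> z \in [set x; y].
  by rewrite inE => /(closed_connect cl) <-; rewrite set21.
apply/forall_inP => a /in_xy /set2P[]->; apply/forall_inP => b /in_xy /set2P[]->;
  by rewrite ?eqxx ?exy ?eyx ?implybT.
Qed.

Lemma stem_typeset1 x : is_leaf e x -> stem x \in V1.
Proof.
move=> lx; have exs := stemP lx.
have sU : stem x \notin Uset e by apply: notin_Uset_adj exs; case/andP: lx.
have si : is_internal e (stem x).
  by move: (leaf_adj_not_leaf lx exs); rewrite /is_leaf /is_internal sU.
have : nleaves e (stem x) != 0.
  by rewrite -lt0n; apply/card_gt0P; exists x; rewrite inE e_sym exs.
by rewrite inE si; case: (types01 si) => ->.
Qed.

Lemma pendant_stem x : is_leaf e x -> pendant (stem x) = x.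
Proof.
by move=> lx; apply/esym/eqP; rewrite -pendant_adjE ?stem_typeset1 // e_sym stemP.
Qed.

Lemma typesetE k v : (v \in typeset e k) =
  is_internal e v && (nleaves e v == k) || (k == 0) && (v \in Uset e).
Proof. by rewrite inE. Qed.

Lemma leaf_notin_typeset k v : is_leaf e v -> v \notin typeset e k.
Proof. by rewrite typesetE /is_internal => /andP[vU ->]; rewrite (negbTE vU) !andbF. Qed.

Lemma typeset1_notin0 v : v \in V1 -> v \notin V0.
Proof.
rewrite !typesetE /is_internal => /orP[/andP[/andP[vU _] /eqP->]|] //=.
by rewrite andbF (negbTE vU).
Qed.

Lemma notin_typeset01_leaf v : v \notin V0 -> v \notin V1 -> is_leaf e v.
Proof.
rewrite !typesetE /= orbF negb_or => /andP[n0 vU] n1.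
have [vi|] := boolP (is_internal e v).
  by case: (types01 vi) => nl; [move: n0 | move: n1]; rewrite vi nl.
by rewrite /is_internal /is_leaf vU /= negbK.
Qed.

Lemma leaf_adj_typeset1 x y : is_leaf e x -> e x y -> y \in V1.
Proof. by move=> lx; rewrite leaf_adjE // => /eqP->; apply: stem_typeset1. Qed.

Lemma alphaT_ge : #|V1| + alpha e V0 <= alpha e [set: T].
Proof.
have [A /indepP[sA eA] <-] := alpha_witness e V0.
pose L := pendant @: V1.
have leafL x : x \in L -> is_leaf e x by case/imsetP=> v /pendantP[_ lp] ->.
have cardL : #|L| = #|V1| by apply/card_in_imset/(can_in_inj stem_pendant).
have LA0 : L :&: A = set0.
  apply/eqP; rewrite -subset0; apply/subsetP => x /setIP[/leafL lx xA].
  by have := leaf_notin_typeset 0 lx; rewrite (subsetP sA).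
have eL x y : x \in L -> y \in L :|: A -> ~~ e x y.
  move=> /leafL lx yLA; apply/negP => /(leaf_adj_typeset1 lx) y1.
  case/setUP: yLA => [/leafL ly|yA]; first by have := leaf_notin_typeset 1 ly; rewrite y1.
  by have := typeset1_notin0 y1; rewrite (subsetP sA).
rewrite -cardL -cardsUI LA0 cards0 addn0; apply: card_le_alpha.
apply/indepP; split=> [|x y /setUP[xL|xA] yLA]; [exact: subsetT | exact: eL |].
case/setUP: (yLA) => [yL|yA]; last exact: eA.
by rewrite e_sym; apply: eL; rewrite // inE xA orbT.
Qed.

Lemma alphaT_le : alpha e [set: T] <= #|V1| + alpha e V0.
Proof.
have [A iA <-] := alpha_witness e [set: T]; have /indepP[_ eA] := iA.
rewrite -(cardsID V0 A) addnC leq_add //; last first.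
  by apply: card_le_alpha; apply: (indepW iA); rewrite ?subsetIl ?subsetIr.
pose g x := if is_leaf e x then stem x else x.
have gV1 x : x \in A :\: V0 -> g x \in V1.
  case/setDP=> _ x0; rewrite /g; case: ifP => [/stem_typeset1 //|lx].
  by apply: contraFT lx => x1; apply: notin_typeset01_leaf.
have ginj : {in A :\: V0 &, injective g}.
  move=> x y /setDP[xA _] /setDP[yA _]; rewrite /g.
  case: ifP => lx; case: ifP => ly gxy //.
  - by rewrite -(pendant_stem lx) gxy pendant_stem.
  - by have := eA x y xA yA; rewrite (leaf_adjE _ lx) gxy eqxx.
  - by have := eA y x yA xA; rewrite (leaf_adjE _ ly) -gxy eqxx.
rewrite -(card_in_imset ginj); apply: subset_leq_card.
by apply/subsetP => _ /imsetP[x xA ->]; apply: gV1.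
Qed.

Lemma alphaT : alpha e [set: T] = #|V1| + alpha e V0.
Proof. by apply/eqP; rewrite eqn_leq alphaT_le alphaT_ge. Qed.

Section LeafCompletion.
Variables I M : {set T}.
Hypotheses (iI : indep e V1 I) (mM : maxindep e (V0 :\: nbhd e I) M).

Definition leaf_completion := I :|: M :|: pendant @: (V1 :\: I).

Lemma leaf_completion_stem x : x \in pendant @: (V1 :\: I) ->
  is_leaf e x /\ stem x \in V1 :\: I.
Proof.
case/imsetP=> v vV1I ->; have /setDP[v1 _] := vV1I.
by rewrite stem_pendant //; have [_ lp] := pendantP v1.
Qed.

Lemma stem_notin_leaf_completion x : x \in pendant @: (V1 :\: I) ->
  stem x \notin leaf_completion.
Proof.
case/leaf_completion_stem=> _ /setDP[s1 sI]; have /andP[/indepP[sM _] _] := mM.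
rewrite !in_setU (negbTE sI) /= negb_or; apply/andP; split.
  by apply: contra (typeset1_notin0 s1) => /(subsetP sM); rewrite in_setD => /andP[].
by apply/negP => /leaf_completion_stem[ls _]; have := leaf_notin_typeset 1 ls; rewrite s1.
Qed.

Lemma indep_leaf_completion : indep e [set: T] leaf_completion.
Proof.
have /indepP[_ eI] := iI; have /andP[/indepP[sM eM] _] := mM.
have eL x y : x \in pendant @: (V1 :\: I) -> y \in leaf_completion -> ~~ e x y.
  move=> xL yS; have [lx _] := leaf_completion_stem xL; rewrite leaf_adjE //.
  by apply: contraNneq (stem_notin_leaf_completion xL) => <-.
have eIM x y : x \in I -> y \in M -> ~~ e x y.
  move=> xI yM; apply/negP => exy; have /setDP[_ /negP[]] := subsetP sM y yM.
  by apply/nbhdP; exists x.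
apply/indepP; split=> [|x y xS yS]; first exact: subsetT.
have [xL|xL] := boolP (x \in pendant @: (V1 :\: I)); first exact: eL.
have [yL|yL] := boolP (y \in pendant @: (V1 :\: I)); first by rewrite e_sym; apply: eL.
move: xS yS; rewrite !in_setU (negbTE xL) (negbTE yL) !orbF.
case/orP=> [xI|xM] /orP[yI|yM]; [exact: eI | exact: eIM | | exact: eM].
by rewrite e_sym; apply: eIM.
Qed.

Lemma maxindep_leaf_completion : maxindep e [set: T] leaf_completion.
Proof.
have /maxindepP[_ dM] := mM.
apply/maxindepP; split=> [|v _ vS]; first exact: indep_leaf_completion.
have [v0|v0] := boolP (v \in V0).
  have [/nbhdP[u uI euv]|vN] := boolP (v \in nbhd e I).
    by exists u; rewrite ?in_setU ?uI // e_sym.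
  have vM : v \notin M by apply: contra vS; rewrite !in_setU => ->; rewrite orbT.
  have [|u uM evu] := dM v _ vM; first by rewrite in_setD vN v0.
  by exists u; rewrite // !in_setU uM orbT.
have [v1|v1] := boolP (v \in V1).
  have vI : v \notin I by apply: contra vS; rewrite !in_setU => ->.
  have [evp _] := pendantP v1; exists (pendant v) => //.
  by rewrite in_setU imset_f ?orbT // in_setD vI v1.
have lv := notin_typeset01_leaf v0 v1; exists (stem v); last exact: stemP.
rewrite !in_setU; have [//|sI] := boolP (stem v \in I).
case/negP: vS; rewrite in_setU -(pendant_stem lv) imset_f ?orbT //.
by rewrite in_setD sI stem_typeset1.
Qed.

Lemma imin_le_leaf_completion : imin e [set: T] <= #|V1| + #|M|.
Proof.
apply: leq_trans (imin_le maxindep_leaf_completion) _.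
have /andP[sI _] := iI.
rewrite -(cardsID I V1) (setIidPr sI) (leq_trans (leq_card_setU _ _)) //.
rewrite (leq_trans (leq_add (leq_card_setU _ _) (leq_imset_card _ _))) //; lia.
Qed.

End LeafCompletion.

Lemma maxindep_setI_typeset0 S : maxindep e [set: T] S ->
  maxindep e (V0 :\: nbhd e (S :&: V1)) (S :&: V0).
Proof.
move=> mS; have /maxindepP[iS dS] := mS; have /indepP[_ eS] := iS.
apply/maxindepP; split.
  apply/indepP; split; last by move=> x y /setIP[xS _] /setIP[yS _]; apply: eS.
  apply/subsetP => z /setIP[zS z0]; rewrite in_setD z0 andbT.
  apply/nbhdP => -[v /setIP[vS _] evz].
  by have := eS v z vS zS; rewrite evz.
move=> v /setDP[v0 vN]; rewrite in_setI v0 andbT => vS.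
have [u uS evu] := dS v (in_setT v) vS; exists u => //.
rewrite in_setI uS /=; have [//|u0] := boolP (u \in V0).
have [u1|u1] := boolP (u \in V1).
  by case/negP: vN; apply/nbhdP; exists u; rewrite ?in_setI ?uS // e_sym.
have euv : e u v by rewrite e_sym.
have := typeset1_notin0 (leaf_adj_typeset1 (notin_typeset01_leaf u0 u1) euv).
by rewrite v0.
Qed.

Lemma card_typeset1_le_maxindep S : maxindep e [set: T] S -> #|V1| <= #|S :\: V0|.
Proof.
move=> /maxindepP[_ dS].
pose h v := if v \in S then v else pendant v.
have hS v : v \in V1 -> h v \in S :\: V0.
  move=> v1; rewrite /h; case: ifP => vS; first by rewrite in_setD vS typeset1_notin0.
  have [evp lp] := pendantP v1.
  rewrite in_setD leaf_notin_typeset //=; apply: contraFT vS => pS.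
  have [u uS epu] := dS _ (in_setT _) pS.
  by move: epu; rewrite leaf_adjE // stem_pendant // => /eqP <-.
have hinj : {in V1 &, injective h}.
  move=> v w v1 w1; rewrite /h; case: ifP => vS; case: ifP => wS hvw //.
  - by have := leaf_notin_typeset 1 (pendantP w1).2; rewrite -hvw v1.
  - by have := leaf_notin_typeset 1 (pendantP v1).2; rewrite hvw w1.
  - by rewrite -(stem_pendant v1) hvw stem_pendant.
rewrite -(card_in_imset hinj); apply: subset_leq_card.
by apply/subsetP => _ /imsetP[v v1 ->]; apply: hS.
Qed.

End Leaves.

Theorem theorem9 (T : finType) (e : rel T) (k : nat)
  (e_sym : symmetric e) (e_irr : irreflexive e)
  (types01 : forall v : T, is_internal e v ->
                nleaves e v = 0 \/ nleaves e v = 1)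
  (G0_nonnull : typeset e 0 != set0) :
  let V0 := typeset e 0 in
  let V1 := typeset e 1 in
  let n0 := max_comp_size e V0 in
  (mu_alpha e [set: T] <= k <->
   (mu_alpha e V0 <= k /\
    forall I : {set T}, indep e V1 I -> #|I| <= (k + 1) * n0 ->
      alpha e V0 - imin e (V0 :\: nbhd e I) <= k)).
Proof.
cbv zeta; rewrite /mu_alpha (alphaT e_sym types01).
split=> [mu_k | [_ small_gap]].
  have gap I : indep e (typeset e 1) I ->
      alpha e (typeset e 0) - imin e (typeset e 0 :\: nbhd e I) <= k.
    move=> iI; have [M mM <-] := imin_witness e_sym e_irr (typeset e 0 :\: nbhd e I).
    by have := imin_le_leaf_completion e_sym types01 iI mM; lia.
  split=> [|I iI _]; last exact: gap.
  by have := gap set0 (indep0 _ _); rewrite nbhd0 setD0.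
have [S mS <-] := imin_witness e_sym e_irr [set: T].
have mM := maxindep_setI_typeset0 e_sym types01 mS.
have cardS : #|typeset e 1| + #|S :&: typeset e 0| <= #|S|.
  by rewrite -(cardsID (typeset e 0) S) addnC leq_add2l card_typeset1_le_maxindep.
suff : alpha e (typeset e 0) <= #|S :&: typeset e 0| + k by lia.
rewrite leqNgt -addnS; apply/negP => /(imin_gap_shrink e_sym e_irr mM)[I' [sI'I cardI' gapI']].
have iI' : indep e (typeset e 1) I'.
  have /andP[iS _] := mS; apply: (indepW iS); apply: (subset_trans sI'I).
    exact: subsetIl.
  exact: subsetIr.
by have := small_gap I' iI'; rewrite addn1 => /(_ cardI'); lia.
Qed.
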